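(* Let $k\ge 2$, let $B_k$ be the automorphism group of the binary rooted tree $X^{[k]}$ and $G_k\le B_k$ the subgroup of automorphisms acting on the leaves $X^k$ by even permutations (so $G_k\cong\mathrm{Syl}_2(A_{2^k})$). An element $g\in G_k$ belongs to $G_k'$ if and only if the index of $g$ on $X^l$ is even for every $0\le l<k-1$, and moreover the number of active vertices of $g$ on level $X^{k-1}$ lying in the subtree rooted at $v_{11}$ is even and the number of those lying in the subtree rooted at $v_{12}$ is even.
   Context: $X=\{0,1\}$; $X^{[k]}$ is the binary rooted tree with levels $X^0,\dots,X^k$; $v_{11},v_{12}$ are the two vertices of level $1$. Each automorphism has at every vertex $v$ of level $<k$ a vertex permutation in $S_2$; $v$ is active if it is nontrivial. The index of $g$ on $X^l$ is the number of active vertices of $g$ in $X^l$. *)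

From HB Require Import structures.
From mathcomp Require Import all_boot all_order all_fingroup.
Set Implicit Arguments. Unset Strict Implicit. Unset Printing Implicit Defensive.

(* The binary rooted tree X^[k], X = {0,1} encoded by bool (0 = false, 1 = true).
   A vertex of level l is a word of length l, i.e. an element of l.-tuple bool;
   the leaves X^k are the elements of k.-tuple bool.  The first letter of a
   word is the one read at the root, so v11 = [:: false], v12 = [:: true]. *)

Definition leaf (k : nat) := (k.-tuple bool)%type.

(* A permutation of the leaves is a tree automorphism iff it preserves, for
   every level l, the relation "having the same ancestor at level l". *)
Definition is_tree_aut (k : nat) (g : {perm leaf k}) : bool :=
  [forall l : 'I_k.+1, forall x : leaf k, forall y : leaf k,
     (take l x == take l y) ==> (take l (g x) == take l (g y))].

Definition B (k : nat) : {set {perm leaf k}} := [set g | is_tree_aut g].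

Definition G (k : nat) : {set {perm leaf k}} := [set g in B k | ~~ odd_perm g].

Definition zero_ext (k : nat) (v : seq bool) : leaf k :=
  [tuple nth false v i | i < k].

(* Vertex permutation of g at a vertex v of level l < k: g maps the child v0
   to either g(v)0 (trivial) or g(v)1 (active); that is read off as the letter
   at position l of the image of the leaf v00...0. *)
Definition active (k l : nat) (g : {perm leaf k}) (v : l.-tuple bool) : bool :=
  nth false (g (zero_ext k v)) l.

Definition level_index (k l : nat) (g : {perm leaf k}) : nat :=
  #|[set v : l.-tuple bool | active g v]|.

Definition last_level_count (k : nat) (g : {perm leaf k}) (b : bool) : nat :=
  #|[set v : (k.-1).-tuple bool | active g v && (nth false v 0 == b)]|.

From mathcomp Require Import all_boot all_order all_fingroup.

Set Implicit Arguments. Unset Strict Implicit. Unset Printing Implicit Defensive.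

(* A tree automorphism is determined by its portrait, the map sending each vertex
   to its vertex permutation, and the portrait of a product is a twisted sum of
   the portraits.  Hence the parity of the number of active vertices on a level is
   additive.  The sign of an automorphism is the parity of its active vertices on
   the last level (the upper levels contribute squares), so for an even
   automorphism the active vertices of the last level below v11 and below v12 have
   the same parity, which is therefore additive on G_k as well.  All these
   parities vanish on commutators.
   Conversely, if they all vanish for g, we clear g level by level from the root:
   the active vertices of a level split into pairs, and each pair is the pattern on
   that level of a commutator of two elements of G_k that are trivial above it. *)

Lemma odd_card_set (T : finType) (p : pred T) : odd #|[set x | p x]| = \big[addb/false]_x p x.
Proof.
rewrite -sum1dep_card (big_morph odd oddD (erefl (odd 0))) big_mkcond /=.
by apply: eq_bigr => x _; case: (p x).
Qed.

Lemma odd_card_set_addb (T : finType) (p q : pred T) :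
  odd #|[set x | p x (+) q x]| = odd #|[set x | p x]| (+) odd #|[set x | q x]|.
Proof. by rewrite !odd_card_set -big_split. Qed.

Lemma odd_perm_commute_flip (T : finType) (g f : {perm T}) (P : pred T) :
  commute g f -> (forall x, f (f x) = x) -> (forall x, P (f x) = ~~ P x) ->
  (forall x, P (g x) = P x) -> odd_perm g = false.
Proof.
move=> gf ff Pf Pg.
(* [g] is the square of [x |-> f (if P x then g x else x)]. *)
pose r x := f (if P x then g x else x).
have rr x : r (r x) = g x.
  rewrite /r; case Px: (P x); rewrite ?Pf ?Pg Px /= ?ff //.
  by have := congr1 (fun s : {perm T} => s x) gf; rewrite !permM => <-.
have r_inj : injective r by move=> x y /(congr1 r); rewrite !rr => /perm_inj.
have -> : g = (perm r_inj * perm r_inj)%g by apply/permP => x; rewrite permM !permE rr.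
by rewrite odd_permM addbb.
Qed.

Section AddbMorphisms.
Variables (gT : finGroupType) (H : {group gT}) (phi : gT -> bool).
Hypothesis phiM : {in H &, {morph phi : x y / (x * y)%g >-> x (+) y}}.

Lemma morph_addb1 : phi 1%g = false.
Proof. by have := phiM (group1 H) (group1 H); rewrite mulg1 addbb. Qed.

Lemma morph_addb_commg : {in H &, forall x y, phi [~ x, y]%g = false}.
Proof.
move=> x y Hx Hy; have phi1 := morph_addb1.
have phiV z : z \in H -> phi z^-1%g = phi z.
  move=> Hz; have := phiM (groupVr Hz) Hz; rewrite mulVg phi1.
  by case: (phi z^-1%g); case: (phi z).
rewrite /commg /conjg !phiM ?groupM ?groupV // !phiV //.
by case: (phi x); case: (phi y).
Qed.

End AddbMorphisms.

(* [a v] is the vertex permutation at [v]; [pact a] is the induced action on words. *)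
Definition portrait := seq bool -> bool.

Definition pact (a : portrait) (v : seq bool) : seq bool :=
  mkseq (fun i => nth false v i (+) a (take i v)) (size v).

Definition pmul (a b : portrait) : portrait := fun v => a v (+) b (pact a v).

Section PortraitAction.
Implicit Types (a b : portrait) (u v w : seq bool).

Lemma size_pact a v : size (pact a v) = size v.
Proof. exact: size_mkseq. Qed.

Lemma nth_pact a v i : i < size v -> nth false (pact a v) i = nth false v i (+) a (take i v).
Proof. exact: nth_mkseq. Qed.

Lemma take_pact a v i : take i (pact a v) = pact a (take i v).
Proof.
have [le_vi | lt_iv] := leqP (size v) i.
  by rewrite !take_oversize ?size_pact.
apply: (@eq_from_nth _ false); first by rewrite size_pact !size_take size_pact.
move=> j; rewrite size_take size_pact lt_iv => lt_ji.
rewrite nth_take // !nth_pact ?size_take ?lt_iv ?(ltn_trans lt_ji lt_iv) //.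
by rewrite nth_take // take_takel // ltnW.
Qed.

Lemma eq_pact a b v : (forall w, size w < size v -> a w = b w) -> pact a v = pact b v.
Proof.
move=> eq_ab; apply: (@eq_from_nth _ false); rewrite ?size_pact // => i lt_iv.
by rewrite !nth_pact // eq_ab // size_take lt_iv.
Qed.

Lemma pact_id a v : (forall w, size w < size v -> a w = false) -> pact a v = v.
Proof.
move=> a0; apply: (@eq_from_nth _ false); rewrite ?size_pact // => i lt_iv.
by rewrite nth_pact // a0 ?addbF // size_take lt_iv.
Qed.

Lemma pactM a b v : pact (pmul a b) v = pact b (pact a v).
Proof.
apply: (@eq_from_nth _ false); rewrite ?size_pact // => i lt_iv.
by rewrite !nth_pact ?size_pact // /pmul take_pact addbA.
Qed.

Lemma pact_inj a u v : size u = size v -> pact a u = pact a v -> u = v.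
Proof.
move=> eq_uv eq_a.
suff eq_take i : take i u = take i v by rewrite -(take_size u) eq_take eq_uv take_size.
elim: i => [|i IHi]; first by rewrite !take0.
have [le_ui | lt_iu] := leqP (size u) i.
  have le_vi : size v <= i by rewrite -eq_uv.
  by move: IHi; rewrite !take_oversize // (leqW le_ui, leqW le_vi).
rewrite !(take_nth false) -?eq_uv // IHi; congr rcons.
have /addIb // : nth false u i (+) a (take i v) = nth false v i (+) a (take i v).
by rewrite -{1}IHi -!nth_pact -?eq_uv // eq_a.
Qed.

Lemma pact_rcons a v e : pact a (rcons v e) = rcons (pact a v) (e (+) a v).
Proof.
apply: (@eq_from_nth _ false) => [|i]; first by rewrite size_pact !size_rcons size_pact.
rewrite size_pact size_rcons ltnS leq_eqVlt => /orP[/eqP -> | lt_iv].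
  by rewrite nth_pact ?size_rcons // !nth_rcons size_pact ltnn eqxx -cats1 take_size_cat.
have le_iv : i <= size v := ltnW lt_iv.
rewrite nth_pact ?size_rcons // !nth_rcons size_pact lt_iv.
by rewrite -cats1 takel_cat // nth_pact.
Qed.

Lemma pact_involutive c v : (forall w, c (pact c w) = c w) -> pact c (pact c v) = v.
Proof. by move=> c_inv; rewrite -pactM pact_id // => w _; rewrite /pmul c_inv addbb. Qed.

Lemma eq_pact_involutive c v w :
  (forall w, c (pact c w) = c w) -> (pact c v == w) = (v == pact c w).
Proof. by move=> c_inv; apply/eqP/eqP => [<- | ->]; rewrite pact_involutive. Qed.

Lemma pmul_xor a b v : (forall w, size w < size v -> a w = false) -> pmul a b v = a v (+) b v.
Proof. by move=> a0; rewrite /pmul pact_id. Qed.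

End PortraitAction.

Section LevelCounts.
Variable l : nat.
Implicit Types (a b : portrait) (v : l.-tuple bool).

Definition tpact a (v : l.-tuple bool) : l.-tuple bool :=
  Tuple (introT eqP (etrans (size_pact a v) (size_tuple v))).

Lemma tpact_inj a : injective (tpact a).
Proof. by move=> u v /(congr1 val) /pact_inj eq_uv; apply/val_inj/eq_uv; rewrite !size_tuple. Qed.

Definition level_count a := #|[set v : l.-tuple bool | a v]|.

Definition subtree_count a (c : bool) := #|[set v : l.-tuple bool | a v && (nth false v 0 == c)]|.

Lemma eq_level_count a b : (forall v, a v = b v) -> level_count a = level_count b.
Proof. by move=> eq_ab; apply: eq_card => v; rewrite !inE eq_ab. Qed.

Lemma eq_subtree_count a b c : (forall v, a v = b v) -> subtree_count a c = subtree_count b c.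
Proof. by move=> eq_ab; apply: eq_card => v; rewrite !inE eq_ab. Qed.

Lemma level_count0 a : (forall v, a v = false) -> level_count a = 0.
Proof. by move=> a0; apply: eq_card0 => v; rewrite !inE a0. Qed.

Lemma level_count_pred1 z : size z = l -> level_count (pred1 z) = 1.
Proof.
move=> size_z; rewrite /level_count -(cards1 (Tuple (introT eqP size_z))).
by apply: eq_card => v; rewrite !inE -val_eqE.
Qed.

Lemma odd_level_count_addb a b :
  odd (level_count (fun w => a w (+) b w)) = odd (level_count a) (+) odd (level_count b).
Proof. exact: odd_card_set_addb. Qed.

Lemma level_count_split a : level_count a = subtree_count a false + subtree_count a true.
Proof.
rewrite /level_count /subtree_count -!sum1dep_card.
rewrite big_mkcond [in RHS]big_mkcond [X in _ + X]big_mkcond -big_split /=.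
by apply: eq_bigr => v _; case: (a v); case: (nth false v 0).
Qed.

Lemma odd_level_count_pmul a b :
  odd (level_count (pmul a b)) = odd (level_count a) (+) odd (level_count b).
Proof.
rewrite odd_level_count_addb; congr (_ (+) odd _).
by rewrite -[RHS](card_preimset _ (@tpact_inj a)); apply: eq_card => v; rewrite !inE.
Qed.

Lemma odd_subtree_count_pmul a b c : 0 < l ->
  odd (subtree_count (pmul a b) c) =
    odd (subtree_count a c) (+) odd (subtree_count b (c (+) a [::])).
Proof.
move=> l_gt0; rewrite /subtree_count.
have -> : #|[set v : l.-tuple bool | pmul a b v && (nth false v 0 == c)]| =
    #|[set v : l.-tuple bool |
        a v && (nth false v 0 == c) (+) b (pact a v) && (nth false v 0 == c)]|.
  by apply: eq_card => v; rewrite !inE andb_addl.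
rewrite odd_card_set_addb; congr (_ (+) odd _).
rewrite -[RHS](card_preimset _ (@tpact_inj a)); apply: eq_card => v; rewrite !inE /=.
by rewrite nth_pact ?size_tuple // take0; case: (nth false v 0); case: c; case: (a [::]).
Qed.

End LevelCounts.

Section TreeAutomorphisms.
Variable k : nat.
Implicit Types (a b : portrait) (g h : {perm leaf k}) (x y : leaf k) (v : seq bool).

Definition pperm a : {perm leaf k} := perm (@tpact_inj k a).

Lemma pperm_val a x : pperm a x = pact a x :> seq bool.
Proof. by rewrite permE. Qed.

Lemma eq_pperm a b : (forall v, size v < k -> a v = b v) -> pperm a = pperm b.
Proof.
move=> eq_ab; apply/permP => x; apply/val_inj; rewrite /= !pperm_val; apply: eq_pact => v.
by rewrite size_tuple; apply: eq_ab.
Qed.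

Lemma ppermM a b : (pperm a * pperm b)%g = pperm (pmul a b).
Proof. by apply/permP => x; apply/val_inj; rewrite permM /= !pperm_val pactM. Qed.

Lemma pperm1 a : (forall v, size v < k -> a v = false) -> pperm a = 1%g.
Proof.
move=> a0; apply/permP => x; apply/val_inj; rewrite /= pperm_val perm1 pact_id // => v.
by rewrite size_tuple; apply: a0.
Qed.

Definition portrait_of g : portrait := fun v => nth false (g (zero_ext k v)) (size v).

Lemma nth_zero_ext v i : i < k -> nth false (zero_ext k v) i = nth false v i.
Proof. by move=> lt_ik; rewrite (nth_mktuple _ _ (Ordinal lt_ik)). Qed.

Lemma take_zero_ext v : size v <= k -> take (size v) (zero_ext k v) = v.
Proof.
move=> le_vk; apply: (@eq_from_nth _ false); first by rewrite size_takel // size_tuple.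
move=> i; rewrite size_takel ?size_tuple // => lt_iv.
by rewrite nth_take // nth_zero_ext // (leq_trans lt_iv).
Qed.

Lemma val_zero_ext v : size v = k -> zero_ext k v = v :> seq bool.
Proof.
move=> size_v; apply: (@eq_from_nth _ false); rewrite ?size_tuple // => i lt_ik.
by rewrite nth_zero_ext.
Qed.

Lemma portrait_of_pperm a v : size v < k -> portrait_of (pperm a) v = a v.
Proof.
move=> lt_vk; rewrite /portrait_of pperm_val nth_pact ?size_tuple //.
by rewrite nth_zero_ext // nth_default // take_zero_ext // ltnW.
Qed.

Lemma tree_autP g :
  reflect (forall l x y, take l x = take l y -> take l (g x) = take l (g y)) (is_tree_aut g).
Proof.
apply: (iffP forallP) => [g_aut l x y eq_xy | g_aut l].
  have [le_kl | lt_lk] := leqP k.+1 l.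
    have take_all (z : leaf k) : take l z = z by rewrite take_oversize // size_tuple ltnW.
    by move: eq_xy; rewrite !take_all => /val_inj ->.
  by have /forallP/(_ x)/forallP/(_ y)/implyP/(_ (introT eqP eq_xy))/eqP := g_aut (Ordinal lt_lk).
by apply/forallP => x; apply/forallP => y; apply/implyP => /eqP /g_aut ->.
Qed.

Lemma is_tree_aut_pperm a : is_tree_aut (pperm a).
Proof. by apply/tree_autP => l x y eq_xy; rewrite !pperm_val !take_pact eq_xy. Qed.

Lemma is_tree_aut1 : is_tree_aut (1%g : {perm leaf k}).
Proof. by apply/tree_autP => l x y; rewrite !perm1. Qed.

Lemma is_tree_autM g h : is_tree_aut g -> is_tree_aut h -> is_tree_aut (g * h)%g.
Proof.
move=> /tree_autP g_aut /tree_autP h_aut; apply/tree_autP => l x y eq_xy.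
by rewrite !permM; apply/h_aut/g_aut.
Qed.

Lemma is_tree_autV g : is_tree_aut g -> is_tree_aut g^-1%g.
Proof.
move=> g_aut; rewrite invg_expg; elim: (#[g]%g).-1 => [|n IHn].
  by rewrite expg0 is_tree_aut1.
by rewrite expgS is_tree_autM.
Qed.

Lemma eq_take_tree_aut g l x y :
  is_tree_aut g -> (take l (g x) == take l (g y)) = (take l x == take l y).
Proof.
move=> g_aut; apply/eqP/eqP; last exact: (tree_autP _ g_aut).
by move/(tree_autP _ (is_tree_autV g_aut)); rewrite !permK.
Qed.

Lemma eq_nth_tree_aut g i x y : is_tree_aut g -> i < k -> take i x = take i y ->
  (nth false (g x) i == nth false (g y) i) = (nth false x i == nth false y i).
Proof.
move=> g_aut lt_ik eq_xy; have := eq_take_tree_aut i.+1 x y g_aut.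
rewrite !(take_nth false) ?size_tuple // !eqseq_rcons eq_xy.
by rewrite (tree_autP _ g_aut _ _ _ eq_xy) !eqxx.
Qed.

Lemma pperm_portrait_of g : is_tree_aut g -> pperm (portrait_of g) = g.
Proof.
move=> g_aut; apply/permP => x; apply/val_inj; apply: (@eq_from_nth _ false).
  by rewrite /= pperm_val size_pact !size_tuple.
rewrite /= pperm_val size_pact size_tuple => i lt_ik.
have size_xi : size (take i x) = i by rewrite size_takel // size_tuple ltnW.
rewrite nth_pact ?size_tuple // /portrait_of size_xi.
set z := zero_ext k (take i x).
have take_z : take i z = take i x by rewrite -{1}size_xi take_zero_ext // size_xi ltnW.
have := eq_nth_tree_aut g_aut lt_ik (esym take_z).
rewrite nth_zero_ext // [nth _ (take _ _) _]nth_default ?size_xi //.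
by case: (nth false x i); case: (nth false (g x) i); case: (nth false (g z) i).
Qed.

Lemma portrait_ofM g h v : is_tree_aut g -> is_tree_aut h -> size v < k ->
  portrait_of (g * h)%g v = pmul (portrait_of g) (portrait_of h) v.
Proof.
move=> g_aut h_aut lt_vk.
by rewrite -{1}(pperm_portrait_of g_aut) -{1}(pperm_portrait_of h_aut) ppermM portrait_of_pperm.
Qed.

Lemma level_indexE l g : level_index l g = level_count l (portrait_of g).
Proof. by apply: eq_card => v; rewrite !inE /active /portrait_of size_tuple. Qed.

Lemma last_level_countE g (b : bool) : last_level_count g b = 
  subtree_count k.-1 (portrait_of g) b.
Proof. by apply: eq_card => v; rewrite !inE /active /portrait_of size_tuple. Qed.

End TreeAutomorphisms.

Section Signs.
Variable k : nat.
Hypothesis k_gt0 : 0 < k.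
Implicit Types (a : portrait) (x : leaf k) (v : seq bool).

Lemma size_take_last x : size (take k.-1 x) = k.-1.
Proof. by rewrite size_takel // size_tuple leq_pred. Qed.

Lemma size_below_last v (w : seq bool) : size v < k -> size w < size v -> (size w == k.-1) = false.
Proof. by move=> lt_vk lt_wv; apply/negbTE; rewrite neq_ltn (leq_trans lt_wv) // -ltnS prednK. Qed.

Lemma odd_perm_pperm_upper a :
  (forall v, size v = k.-1 -> a v = false) -> odd_perm (pperm k a) = false.
Proof.
move=> a_last; set flip : portrait := fun v => size v == k.-1.
have lt_k1k : k.-1 < k by rewrite ltn_predL.
apply: (@odd_perm_commute_flip _ _ (pperm k flip) (fun x : leaf k => nth false x k.-1)).
- rewrite /commute !ppermM; apply: eq_pperm => v lt_vk.
  rewrite [RHS]pmul_xor => [|w]; last exact: size_below_last.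
  by rewrite /pmul /flip /= size_pact addbC.
- move=> x; rewrite -permM ppermM pperm1 ?perm1 // => v _.
  by rewrite /pmul /flip /= size_pact addbb.
- by move=> x; rewrite pperm_val nth_pact ?size_tuple // /flip /= size_take_last eqxx addbT.
- by move=> x; rewrite pperm_val nth_pact ?size_tuple // a_last ?addbF ?size_take_last.
Qed.

Lemma leaf_rcons x : x = rcons (take k.-1 x) (nth false x k.-1) :> seq bool.
Proof.
by rewrite -take_nth ?size_tuple ?ltn_predL // prednK // take_oversize // size_tuple.
Qed.

Lemma pperm_pred1_last u : size u = k.-1 ->
  pperm k (pred1 u) = tperm (zero_ext k (rcons u false)) (zero_ext k (rcons u true)).
Proof.
move=> size_u; set y := fun b => zero_ext k (rcons u b).
have y_val b : y b = rcons u b :> seq bool by rewrite val_zero_ext // size_rcons size_u prednK.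
have y_take b : take k.-1 (y b) = u by rewrite y_val -cats1 take_size_cat.
have y_nth b : nth false (y b) k.-1 = b by rewrite y_val nth_rcons size_u ltnn eqxx.
have pperm_x x : pperm k (pred1 u) x =
    rcons (take k.-1 x) (nth false x k.-1 (+) (take k.-1 x == u)) :> seq bool.
  rewrite pperm_val {1}leaf_rcons pact_rcons pact_id // => w; rewrite size_take_last => lt_w.
  by apply/negbTE; apply: contraTneq lt_w => ->; rewrite size_u ltnn.
apply/permP => x; case: (eqVneq (take k.-1 x) u) => [x_u | x_u].
  have -> : x = y (nth false x k.-1) by apply/val_inj; rewrite /= y_val {1}leaf_rcons x_u.
  by case: (nth false x k.-1); [rewrite tpermR | rewrite tpermL];
    apply/val_inj; rewrite /= pperm_x y_take y_nth y_val eqxx.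
rewrite tpermD; first by apply/val_inj; rewrite /= pperm_x (negbTE x_u) addbF -leaf_rcons.
all: by apply: contraNneq x_u => <-; rewrite y_take.
Qed.

Lemma odd_perm_pperm_last a : (forall v, size v != k.-1 -> a v = false) ->
  odd_perm (pperm k a) = odd (level_count k.-1 a).
Proof.
move=> a_last; have [n] := ubnP (level_count k.-1 a).
elim: n a a_last => // n IHn a a_last; rewrite ltnS => count_a.
have [u /= au | a0] := pickP [pred v : (k.-1).-tuple bool | a v]; last first.
  rewrite level_count0 => [|v]; last exact: a0.
  rewrite pperm1 ?odd_perm1 // => v _; have [size_v | /a_last //] := eqVneq (size v) k.-1.
  exact: a0 (Tuple (introT eqP size_v)).
pose a' v := a v && (v != u).
have a'_last v : size v != k.-1 -> a' v = false by move/a_last; rewrite /a' => ->.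
have count_a' : level_count k.-1 a = (level_count k.-1 a').+1.
  rewrite /level_count (cardsD1 u) inE au; congr _.+1.
  by apply: eq_card => v; rewrite !inE andbC.
have -> : pperm k a = (pperm k a' * pperm k (pred1 (val u)))%g.
  rewrite ppermM; apply: eq_pperm => v lt_vk; rewrite pmul_xor => [|w lt_wv]; last first.
    by apply: a'_last; rewrite (size_below_last lt_vk lt_wv).
  by rewrite /a' /=; case: (eqVneq v u) => [->|]; rewrite ?au ?andbF ?andbT ?addbF.
have y_neq : zero_ext k (rcons u false) != zero_ext k (rcons u true).
  apply/eqP => /(congr1 (fun x : leaf k => nth false x k.-1)).
  by rewrite !nth_zero_ext ?ltn_predL // !nth_rcons size_tuple ltnn eqxx.
rewrite odd_permM IHn //; last by rewrite -ltnS -count_a'.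
rewrite pperm_pred1_last ?size_tuple //.
by rewrite odd_tperm y_neq count_a' addbT.
Qed.

Lemma odd_perm_pperm a : odd_perm (pperm k a) = odd (level_count k.-1 a).
Proof.
pose top v := (size v == k.-1) && a v.
pose low v := (size v != k.-1) && a v.
have -> : pperm k a = (pperm k top * pperm k low)%g.
  rewrite ppermM; apply: eq_pperm => v lt_vk; rewrite pmul_xor => [|w lt_wv].
    by rewrite /top /low /=; case: (size v == k.-1); case: (a v).
  by rewrite /top (size_below_last lt_vk lt_wv).
rewrite odd_permM (@odd_perm_pperm_upper low) ?addbF => [|v size_v]; last first.
  by rewrite /low /= size_v eqxx.
rewrite odd_perm_pperm_last => [|v /negbTE size_v]; last by rewrite /top /= size_v.
by congr odd; apply: eq_card => v; rewrite !inE /top size_tuple eqxx.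
Qed.

End Signs.

Lemma group_set_G k : group_set (G k).
Proof.
apply/group_setP; split.
  by rewrite !inE odd_perm1 is_tree_aut1.
move=> g h; rewrite !inE odd_permM => /andP[g_aut /negbTE ->] /andP[h_aut /negbTE ->].
by rewrite is_tree_autM.
Qed.

Canonical G_group k := Group (group_set_G k).

Lemma tree_aut_G k (g : {perm leaf k}) : g \in G k -> is_tree_aut g.
Proof. by rewrite !inE => /andP[]. Qed.

Section CommutatorSubgroup.
Variable k : nat.
Hypothesis k_gt1 : 1 < k.
Implicit Types (a c d : portrait) (g h : {perm leaf k}).

Let k_gt0 : 0 < k := ltnW k_gt1.
Let lt_k1k : k.-1 < k := etrans (ltn_predL k) k_gt0.
Let k1_gt0 : 0 < k.-1. Proof. by rewrite -ltnS prednK. Qed.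

Lemma pperm_in_G a : (pperm k a \in G k) = ~~ odd (level_count k.-1 a).
Proof. by rewrite !inE is_tree_aut_pperm (odd_perm_pperm k_gt0). Qed.

Lemma odd_level_index_morph l : l < k ->
  {in G k &, {morph (fun g => odd (level_index l g)) : g h / (g * h)%g >-> g (+) h}}.
Proof.
move=> lt_lk g h /tree_aut_G g_aut /tree_aut_G h_aut /=.
rewrite !level_indexE -odd_level_count_pmul.
by congr odd; apply: eq_level_count => v; rewrite portrait_ofM // size_tuple.
Qed.

Lemma odd_last_level_count_G g b : g \in G k ->
  odd (last_level_count g b) = odd (last_level_count g false).
Proof.
move=> g_G; have : ~~ odd_perm g by move: g_G; rewrite !inE => /andP[].
rewrite -{1}(pperm_portrait_of (tree_aut_G g_G)).
rewrite (odd_perm_pperm k_gt0) level_count_split oddD !last_level_countE.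
by case: b => //; case: odd; case: odd.
Qed.

Lemma odd_last_level_count_morph :
  {in G k &, {morph (fun g => odd (last_level_count g false)) : g h / (g * h)%g >-> g (+) h}}.
Proof.
move=> g h g_G h_G /=; rewrite -(odd_last_level_count_G (false (+) portrait_of g [::]) h_G).
rewrite !last_level_countE -odd_subtree_count_pmul //.
by congr odd; apply: eq_subtree_count => v; rewrite portrait_ofM ?tree_aut_G // size_tuple.
Qed.

Definition parity_kernel : {set {perm leaf k}} :=
  [set g in G k | [forall l : 'I_k.-1, ~~ odd (level_index l g)]
                 && ~~ odd (last_level_count g false)].

Let lt_level_k (l : 'I_k.-1) : l < k := ltn_trans (ltn_ord l) lt_k1k.

Lemma group_set_parity_kernel : group_set parity_kernel.
Proof.
apply/group_setP; split.
  rewrite inE group1 (morph_addb1 odd_last_level_count_morph) andbT.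
  by apply/forallP => l; rewrite (morph_addb1 (odd_level_index_morph (lt_level_k l))).
move=> g h /setIdP[g_G /andP[/forallP g_lev g_last]] /setIdP[h_G /andP[/forallP h_lev h_last]].
rewrite inE groupM //= odd_last_level_count_morph // (negbTE g_last) (negbTE h_last) andbT.
by apply/forallP => l; rewrite odd_level_index_morph // (negbTE (g_lev l)) (negbTE (h_lev l)).
Qed.

Canonical parity_kernel_group := Group group_set_parity_kernel.

Lemma commutator_sub_parity_kernel : [~: G k, G k]%g \subset parity_kernel.
Proof.
rewrite gen_subG; apply/subsetP => _ /imset2P[x y x_G y_G ->].
rewrite inE groupR //= (morph_addb_commg odd_last_level_count_morph) // andbT.
by apply/forallP => l; rewrite (morph_addb_commg (odd_level_index_morph (lt_level_k l))).
Qed.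

Definition realizable l (p : portrait) := exists d, [/\ pperm k d \in [~: G k, G k]%g,
  forall v, size v < l -> d v = false & forall v, size v = l -> d v = p v].

Lemma realizable_ext l p q :
  (forall v, size v = l -> p v = q v) -> realizable l p -> realizable l q.
Proof.
by move=> eq_pq [d [d_comm d_up d_l]]; exists d; split => // v size_v; rewrite d_l ?eq_pq.
Qed.

Lemma realizable0 l : realizable l (fun=> false).
Proof. by exists (fun=> false); split; rewrite // pperm1 ?group1. Qed.

Lemma realizable_addb l p q :
  realizable l p -> realizable l q -> realizable l (fun v => p v (+) q v).
Proof.
move=> [d [d_comm d_up d_l]] [e [e_comm e_up e_l]]; exists (pmul d e); split.
- by rewrite -ppermM groupM.
- move=> v lt_vl; rewrite pmul_xor ?d_up ?e_up // => w lt_wv.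
  exact: d_up (ltn_trans lt_wv lt_vl).
- by move=> v size_v; rewrite pmul_xor ?d_l ?e_l // => w; rewrite size_v; apply: d_up.
Qed.

Lemma invg_pperm c : (forall v, c (pact c v) = c v) -> (pperm k c)^-1%g = pperm k c.
Proof.
by move=> c_inv; apply/eqP; rewrite eq_invg_mul ppermM pperm1 // => v _; rewrite /pmul c_inv addbb.
Qed.

Lemma realizable_commg l a c : (forall v, a v -> size v = l) ->
  (forall v, c (pact c v) = c v) -> pperm k a \in G k -> pperm k c \in G k ->
  realizable l (fun v => a v (+) a (pact c v)).
Proof.
move=> a_l c_inv a_G c_G.
have a_up v : size v != l -> a v = false by apply: contraNF => /a_l ->.
have a_fix v : size v <= l -> pact a v = v.
  by move=> le_vl; apply: pact_id => w lt_wv; rewrite a_up // ltn_eqF // (leq_trans lt_wv).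
have a_inv v : a (pact a v) = a v.
  have [le_vl | lt_lv] := leqP (size v) l; first by rewrite a_fix.
  by rewrite !a_up ?size_pact ?gtn_eqF.
set d := pmul a (pmul c (pmul a c)).
have d_val v : size v <= l -> d v = a v (+) a (pact c v).
  move=> le_vl; rewrite /d /pmul a_fix // a_fix ?size_pact // c_inv.
  by case: (a v); case: (c v); case: (a (pact c v)).
exists d; split.
- by have := mem_commg a_G c_G; rewrite /commg /conjg (invg_pperm a_inv) (invg_pperm c_inv) !ppermM.
- by move=> v lt_vl; rewrite d_val ?(ltnW lt_vl) // !a_up ?size_pact ?ltn_eqF.
- by move=> v size_v; rewrite d_val // size_v.
Qed.

Lemma realizable_pair_mid l u : l < k.-1 -> size u = l ->
  realizable l (fun v => (v == nseq l false) (+) (v == u)).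
Proof.
move=> lt_l size_u; set z := nseq l false; set c : portrait := fun w => nth false u (size w).
have c_inv w : c (pact c w) = c w by rewrite /c size_pact.
have cz : pact c z = u.
  apply: (@eq_from_nth _ false); rewrite size_pact size_nseq ?size_u // => i lt_il.
  by rewrite nth_pact ?size_nseq // nth_nseq lt_il /c size_takel // size_nseq ltnW.
apply: realizable_ext (realizable_commg (a := pred1 z) _ c_inv _ _) => [v _ | v /eqP -> | |].
- by rewrite /= eq_pact_involutive // cz.
- by rewrite size_nseq.
- rewrite pperm_in_G level_count0 // => v /=; apply/negbTE/eqP => /(congr1 size).
  by rewrite size_tuple size_nseq => eq_l; rewrite eq_l ltnn in lt_l.
- by rewrite pperm_in_G level_count0 // => v; rewrite /c size_tuple nth_default // size_u ltnW.
Qed.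

Lemma realizable_pair_last u : size u = k.-1 ->
  realizable k.-1 (fun v => (v == nth false u 0 :: nseq k.-2 false) (+) (v == u)).
Proof.
move=> size_u; set b := nth false u 0.
set z := b :: nseq k.-2 false; set z' := ~~ b :: nseq k.-2 false.
have size_z : size z = k.-1 by rewrite /= size_nseq prednK.
have size_z' : size z' = k.-1 by rewrite /= size_nseq prednK.
set c : portrait := fun w => (0 < size w) && (nth false w 0 == b) && nth false u (size w).
have nth_c w i : i < size w -> nth false (pact c w) i =
    nth false w i (+) [&& 0 < i, nth false w 0 == b & nth false u i].
  move=> lt_iw; rewrite nth_pact // /c size_takel ?(ltnW lt_iw) //.
  by case: i lt_iw => //= i lt_iw; rewrite nth_take.
have c_inv w : c (pact c w) = c w.
  rewrite /c size_pact; case: (posnP (size w)) => // w_gt0.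
  by rewrite nth_c // addbF.
have cz : pact c z = u.
  apply: (@eq_from_nth _ false); rewrite size_pact size_z ?size_u // => i lt_il.
  rewrite nth_c ?size_z //; case: i lt_il => [|i] _ /=; first exact: addbF.
  by rewrite eqxx nth_nseq if_same.
have cz' : pact c z' = z'.
  apply: (@eq_from_nth _ false) => [|i]; rewrite size_pact // => lt_il.
  have nbb : (~~ b == b) = false by case: (b).
  by rewrite nth_c //= nbb andbF addbF.
(* [a] is also active at the mirror [z'] of [z] to make [pperm k a] even; [c] fixes [z']. *)
pose a : portrait := fun w => (w == z) (+) (w == z').
apply: realizable_ext (realizable_commg (a := a) _ c_inv _ _) => [v _ | v | |].
- rewrite /a /= !eq_pact_involutive // cz cz'.
  by case: (v == z); case: (v == z'); case: (v == u).
- by rewrite /a; case: eqP => [-> _ | _ /eqP ->].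
- by rewrite pperm_in_G odd_level_count_addb !level_count_pred1.
- rewrite pperm_in_G level_count0 // => v.
  by rewrite /c size_tuple (nth_default _ (eq_leq size_u)) andbF.
Qed.

Lemma realizable_even l (Z : seq bool -> seq bool) a :
  (forall u, size u = l -> realizable l (fun v => (v == Z u) (+) (v == u))) ->
  (forall v, size v = l -> ~~ odd #|[set u : l.-tuple bool | a u && (v == Z u)]|) ->
  realizable l a.
Proof.
move=> Z_pair Z_even.
pose pxor (p q : portrait) : portrait := fun v => p v (+) q v.
pose pair (u : l.-tuple bool) : portrait := fun v => (v == Z u) (+) (v == u).
have : realizable l (\big[pxor/fun=> false]_(u : l.-tuple bool | a u) pair u).
  apply: big_ind => [|p q|u _]; [exact: realizable0 | exact: realizable_addb |].
  by apply: Z_pair; rewrite size_tuple.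
apply: realizable_ext => v size_v.
rewrite (big_morph (fun p : portrait => p v) (id1 := false) (op1 := addb)) // big_split /=.
rewrite big_mkcond [X in _ (+) X]big_mkcond /=.
have -> : \big[addb/false]_(u : l.-tuple bool) (if a u then v == Z u else false) =
    odd #|[set u : l.-tuple bool | a u && (v == Z u)]|.
  by rewrite odd_card_set; apply: eq_bigr => u _; case: (a u).
rewrite (negbTE (Z_even v size_v)) (bigD1 (Tuple (introT eqP size_v))) //= eqxx.
rewrite big1 => [|u /negbTE u_v]; first by case: (a v).
by rewrite eq_sym (u_v : (val u == v) = false) if_same.
Qed.

Lemma realizable_mid l a : l < k.-1 -> ~~ odd (level_count l a) -> realizable l a.
Proof.
move=> lt_l a_even; apply: (realizable_even (Z := fun=> nseq l false)) => [u | v _].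
  exact: realizable_pair_mid.
case: (v =P nseq l false) => [_ | _]; last by rewrite eq_card0 // => u; rewrite !inE andbF.
by rewrite (eq_card (B := [set u : l.-tuple bool | a u])) // => u; rewrite !inE andbT.
Qed.

Lemma realizable_last a : ~~ odd (subtree_count k.-1 a false) ->
  ~~ odd (subtree_count k.-1 a true) -> realizable k.-1 a.
Proof.
set Z := fun u : seq bool => nth false u 0 :: nseq k.-2 false.
move=> a_false a_true; apply: (realizable_even (Z := Z)) => [u | v size_v].
  exact: realizable_pair_last.
have [v_Z | v_ne] := eqVneq v (Z v).
  rewrite (eq_card (B := [set u : (k.-1).-tuple bool | a u && (nth false u 0 == nth false v 0)])).
    by case: (nth false v 0).
  by move=> u; rewrite !inE {1}v_Z eqseq_cons eqxx andbT eq_sym.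
rewrite eq_card0 // => u; rewrite !inE; case: eqP => [v_Zu | _]; last by rewrite andbF.
by case/eqP: v_ne; rewrite {1}v_Zu v_Zu.
Qed.

Lemma realizable_parity_kernel l a : l < k -> pperm k a \in parity_kernel -> realizable l a.
Proof.
move=> lt_lk /setIdP[a_G /andP[/forallP a_lev a_last]].
have portraitE v : size v < k -> portrait_of (pperm k a) v = a v := @portrait_of_pperm k a v.
have [lt_l1 | ge_l1] := ltnP l k.-1.
  apply: (realizable_mid lt_l1); have := a_lev (Ordinal lt_l1).
  by rewrite level_indexE (eq_level_count (b := a)) // => v; rewrite portraitE ?size_tuple.
have le_l1 : l <= k.-1 by rewrite -ltnS prednK.
have -> : l = k.-1 by apply/eqP; rewrite eqn_leq le_l1 ge_l1.
have subtreeE (c : bool) : last_level_count (pperm k a) c = subtree_count k.-1 a c.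
  by rewrite last_level_countE; apply: eq_subtree_count => v; rewrite portraitE ?size_tuple.
by apply: realizable_last; rewrite -subtreeE ?(odd_last_level_count_G true a_G).
Qed.

Lemma pperm_in_commutator n a : (forall v, size v < k - n -> a v = false) ->
  pperm k a \in parity_kernel -> pperm k a \in [~: G k, G k]%g.
Proof.
elim: n a => [|n IHn] a a_up a_K.
  by rewrite pperm1 ?group1 // => v; rewrite -(subn0 k); apply: a_up.
have [le_kn | lt_nk] := leqP k n.
  by apply: IHn => // v; rewrite (eqP (_ : k - n == 0)) ?subn_eq0.
set l := k - n.+1 in a_up.
have lt_lk : l < k by rewrite ltn_subrL.
have [d [d_comm d_up d_l]] := realizable_parity_kernel lt_lk a_K.
have ad_K : pperm k (pmul a d) \in parity_kernel.
  by rewrite -ppermM groupM // (subsetP commutator_sub_parity_kernel).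
have ad_comm : pperm k (pmul a d) \in [~: G k, G k]%g.
  apply: IHn ad_K => v; rewrite -subnSK // ltnS leq_eqVlt => /orP[/eqP size_v | lt_vl].
    by rewrite pmul_xor ?d_l ?addbb // => w; rewrite size_v; apply: a_up.
  by rewrite pmul_xor ?a_up ?d_up // => w lt_wv; apply/a_up/(ltn_trans lt_wv).
by rewrite -(mulgK (pperm k d) (pperm k a)) ppermM groupM ?groupV.
Qed.

Lemma commutator_GE : [~: G k, G k]%g = parity_kernel.
Proof.
apply/eqP; rewrite eqEsubset commutator_sub_parity_kernel; apply/subsetP => g g_K.
have g_aut : is_tree_aut g by case/setIdP: g_K => /tree_aut_G.
rewrite -(pperm_portrait_of g_aut) (@pperm_in_commutator k) ?pperm_portrait_of // => v.
by rewrite subnn.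
Qed.

End CommutatorSubgroup.

Theorem lemma8 (k : nat) (hk : 2 <= k) (g : {perm leaf k}) (hg : g \in G k) :
  g \in ([~: G k, G k])%g <->
  [/\ forall l : nat, l < k.-1 -> ~~ odd (level_index l g),
      ~~ odd (last_level_count g false) &
      ~~ odd (last_level_count g true)].
Proof.
rewrite (commutator_GE hk) inE hg /=.
split => [/andP[/forallP g_lev g_last] | [g_lev g_false g_true]].
  split=> // [l lt_l | ]; first exact: (g_lev (Ordinal lt_l)).
  by rewrite (odd_last_level_count_G hk true hg).
by rewrite g_false andbT; apply/forallP => l; apply: g_lev.
Qed.
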